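(* Let $f(x,y)=\alpha+\beta x+\gamma y$, where $\alpha,\beta,\gamma$ are positive real numbers with $\alpha\le1$ and $2\beta>\gamma$. For every $\epsilon>0$ there is $\nu_0(\epsilon)$ such that, for all integers $\nu\ge\nu_0(\epsilon)$ and $\mu$ with $$2\nu\le\mu<2\gamma(2\beta-\gamma)\nu^2+(2\alpha-\gamma-1)\nu-\frac{(2-2\alpha+\gamma)^2}{8\gamma(2\beta-\gamma)}-\epsilon,$$ we have $f(x,y)\ge\frac{\mu}{\nu}$ for every $(x,y)\in\Omega:=\{(x,y)\in\mathbb{R}^2: x>0,\ y\ge0,\ x(\tfrac12x+\tfrac12+y)+\nu\ge\mu\}$. *)

From Stdlib Require Import Reals ZArith.
Open Scope R_scope.

Definition f_lin (alpha beta gamma x y : R) : R := alpha + beta * x + gamma * y.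

Definition Omega (nu mu : R) (x y : R) : Prop :=
  0 < x /\ 0 <= y /\ x * (x / 2 + 1 / 2 + y) + nu >= mu.

(* Put m = mu - nu, a = 2 beta - gamma, c = 1 + gamma/2 - alpha and K = a gamma.
   On Omega, x y >= m - x^2/2 - x/2, so after multiplying by nu x the claim
   f >= mu/nu follows from the nonnegativity of the quadratic
   (a nu/2) x^2 - (c nu + m) x + gamma m nu in x, i.e. from its discriminant
   (c nu + m)^2 - 2 K m nu^2 being nonpositive.  As a function of m this
   discriminant is a monic quadratic, so it suffices to check its sign at the two
   ends m = nu and m = 2 K nu^2 - 2 c nu - c^2/(2K) - eps of the allowed range;
   at both ends it is negative for large nu. *)

From Stdlib Require Import Reals ZArith Lra Psatz.
Open Scope R_scope.

Lemma quadratic_ge0_of_discr_le0 (A B C x : R) :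
  0 < A -> B ^ 2 <= 4 * A * C -> 0 <= A * x ^ 2 - B * x + C.
Proof.
  intros HA Hdisc.
  assert (Hsq : 0 <= (2 * A * x - B) ^ 2) by apply pow2_ge_0.
  nra.
Qed.

Lemma monic_quadratic_le0_between (p q z1 z2 z : R) :
  z1 <= z <= z2 ->
  z1 ^ 2 + p * z1 + q <= 0 -> z2 ^ 2 + p * z2 + q <= 0 ->
  z ^ 2 + p * z + q <= 0.
Proof.
  intros [H1 H2] Q1 Q2.
  assert (Hinterp : (z2 - z1) * (z ^ 2 + p * z + q)
    = (z2 - z) * (z1 ^ 2 + p * z1 + q) + (z - z1) * (z2 ^ 2 + p * z2 + q)
      - (z2 - z1) * (z - z1) * (z2 - z)) by ring.
  destruct (Req_dec z1 z2) as [-> | Hne].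
  - replace z with z2 by lra. exact Q2.
  - assert (Hchord : 0 <= (z - z1) * (z2 - z)) by nra.
    nra.
Qed.

Definition discr (K c n m : R) : R := (c * n + m) ^ 2 - 2 * K * m * n ^ 2.

Lemma discr_monic (K c n m : R) :
  discr K c n m = m ^ 2 + (2 * c * n - 2 * K * n ^ 2) * m + c ^ 2 * n ^ 2.
Proof. unfold discr. ring. Qed.

Lemma discr_diag_le0 (K c n : R) :
  0 <= n -> (1 + c) ^ 2 <= 2 * K * n -> discr K c n n <= 0.
Proof.
  intros Hn Hlarge.
  replace (discr K c n n) with (n ^ 2 * ((1 + c) ^ 2 - 2 * K * n))
    by (unfold discr; ring).
  assert (Hn2 : 0 <= n ^ 2) by apply pow2_ge_0.
  nra.
Qed.

Lemma discr_top_le0 (K c d n : R) :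
  1 <= n -> 2 * c * d + d ^ 2 <= (2 * K * d - c ^ 2) * n ->
  discr K c n (2 * K * n ^ 2 - 2 * c * n - d) <= 0.
Proof.
  intros Hn Hlarge.
  replace (discr K c n (2 * K * n ^ 2 - 2 * c * n - d))
    with (2 * c * d * n + d ^ 2 - (2 * K * d - c ^ 2) * n ^ 2)
    by (unfold discr; ring).
  assert (Hd2 : 0 <= d ^ 2) by apply pow2_ge_0.
  nra.
Qed.

Lemma discr_le0 (K c d n m : R) :
  1 <= n ->
  (1 + c) ^ 2 <= 2 * K * n ->
  2 * c * d + d ^ 2 <= (2 * K * d - c ^ 2) * n ->
  n <= m <= 2 * K * n ^ 2 - 2 * c * n - d ->
  discr K c n m <= 0.
Proof.
  intros Hn Hlow Hhigh Hm.
  rewrite discr_monic.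
  apply (monic_quadratic_le0_between _ _ _ _ _ Hm); rewrite <- discr_monic.
  - apply discr_diag_le0; lra.
  - now apply discr_top_le0.
Qed.

Lemma f_lin_ge_of_discr_le0 (alpha beta gamma n u x y : R) :
  0 < gamma -> 2 * beta > gamma -> 0 < n ->
  Omega n u x y ->
  discr (gamma * (2 * beta - gamma)) (1 + gamma / 2 - alpha) n (u - n) <= 0 ->
  f_lin alpha beta gamma x y >= u / n.
Proof.
  intros Hg Hbg Hn [Hx [_ Hom]] Hdisc.
  unfold discr in Hdisc. unfold f_lin.
  set (a := 2 * beta - gamma) in *.
  set (c := 1 + gamma / 2 - alpha) in *.
  set (m := u - n) in *.
  assert (Ha : 0 < a) by (unfold a; lra).
  assert (Hquad : 0 <= (a * n / 2) * x ^ 2 - (c * n + m) * x + gamma * m * n).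
  { apply quadratic_ge0_of_discr_le0; nra. }
  assert (Hxy : gamma * (x * y) >= gamma * (m - x ^ 2 / 2 - x / 2))
    by (unfold m; nra).
  apply Rle_ge, (Rmult_le_reg_r (n * x)); [nra |].
  replace (u / n * (n * x)) with (u * x) by (field; lra).
  unfold c, a, m in *.
  nra.
Qed.

Lemma mul_ge_of_div_le (a b n : R) : 0 < b -> a / b <= n -> a <= b * n.
Proof.
  intros Hb Hdiv.
  apply (Rmult_le_compat_l b) in Hdiv; [| lra].
  replace (b * (a / b)) with a in Hdiv by (field; lra).
  exact Hdiv.
Qed.

Lemma IZR_eventually_ge (B : R) :
  exists nu0 : Z, forall nu : Z, (nu0 <= nu)%Z -> B <= IZR nu.
Proof.
  exists (up B). intros nu Hnu.
  apply IZR_le in Hnu.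
  destruct (archimed B) as [Hup _].
  lra.
Qed.

Theorem lemma4p3 (alpha beta gamma : R)
  (Ha : 0 < alpha) (Hb : 0 < beta) (Hg : 0 < gamma)
  (Ha1 : alpha <= 1) (Hbg : 2 * beta > gamma) :
  forall eps : R, 0 < eps ->
  exists nu0 : Z,
  forall nu mu : Z, (nu0 <= nu)%Z ->
    2 * IZR nu <= IZR mu ->
    IZR mu < 2 * gamma * (2 * beta - gamma) * IZR nu ^ 2
             + (2 * alpha - gamma - 1) * IZR nu
             - (2 - 2 * alpha + gamma) ^ 2 / (8 * gamma * (2 * beta - gamma))
             - eps ->
    forall x y : R, Omega (IZR nu) (IZR mu) x y ->
      f_lin alpha beta gamma x y >= IZR mu / IZR nu.
Proof.
  intros eps Heps.
  set (K := gamma * (2 * beta - gamma)).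
  set (c := 1 + gamma / 2 - alpha).
  set (d := c ^ 2 / (2 * K) + eps).
  assert (HK : 0 < K) by (unfold K; nra).
  assert (Hslack : 2 * K * d - c ^ 2 = 2 * K * eps) by (unfold d; field; lra).
  destruct (IZR_eventually_ge
    (Rmax 1 (Rmax ((1 + c) ^ 2 / (2 * K)) ((2 * c * d + d ^ 2) / (2 * K * eps)))))
    as [nu0 Hnu0].
  exists nu0.
  intros nu mu Hnu Hmu_low Hmu_high x y Hxy.
  specialize (Hnu0 nu Hnu).
  set (n := IZR nu) in *.
  assert (Hn : 1 <= n) by (eapply Rle_trans; [apply Rmax_l | exact Hnu0]).
  assert (Hlow : (1 + c) ^ 2 <= 2 * K * n).
  { apply mul_ge_of_div_le; [lra |].
    eapply Rle_trans; [| exact Hnu0].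
    eapply Rle_trans; [apply Rmax_l | apply Rmax_r]. }
  assert (Hhigh : 2 * c * d + d ^ 2 <= (2 * K * d - c ^ 2) * n).
  { rewrite Hslack. apply mul_ge_of_div_le; [nra |].
    eapply Rle_trans; [| exact Hnu0].
    eapply Rle_trans; [apply Rmax_r | apply Rmax_r]. }
  replace ((2 - 2 * alpha + gamma) ^ 2 / (8 * gamma * (2 * beta - gamma)))
    with (c ^ 2 / (2 * K)) in Hmu_high by (unfold c, K; field; lra).
  apply f_lin_ge_of_discr_le0; [lra | lra | lra | exact Hxy |].
  change (discr K c n (IZR mu - n) <= 0).
  apply (discr_le0 _ _ d); [exact Hn | exact Hlow | exact Hhigh |].
  unfold d, K, c in *; lra.
Qed.
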